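(* Let $\tau=\{\tau_1,\dots,\tau_n\}$ with $\tau_i=(T_i,C_i,D_i)$, $0<C_i\le D_i\le T_i$, let $m'$ be a positive integer, and let $R=\langle\Pi,\Theta,m'\rangle$ be an MPR model with $U_\tau<\Theta/\Pi$, where $U_\tau=\sum_{i=1}^n C_i/T_i$. Fix $k\in\{1,\dots,n\}$. Define - $C_\Sigma$ as the sum of the $m'-1$ largest values among $C_1,\dots,C_n$; - $U=\sum_{i=1}^n (T_i-D_i)\,C_i/T_i$; - $B=\frac{\Theta}{\Pi}\big[2+2(\Pi-\Theta/m')\big]$. If there is a real $A_k\ge0$ with $\mathrm{dem}_k(A_k+D_k,m')>\mathrm{sbf}_R(A_k+D_k)$, then there is such an $A_k\ge 0$ that also satisfies $$A_k<\frac{C_\Sigma+m'C_k-D_k\left(\frac{\Theta}{\Pi}-U_\tau\right)+U+B}{\frac{\Theta}{\Pi}-U_\tau}.$$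
   Context: MPR model: $R=\langle\Pi,\Theta,m'\rangle$ with $\Pi>0$, $m'$ a positive integer and $0\le\Theta\le m'\Pi$. A supply pattern of $R$ is a piecewise-constant function $s:[0,\infty)\to\{0,1,\dots,m'\}$ with $\int_{j\Pi}^{(j+1)\Pi}s(t)\,dt=\Theta$ for every integer $j\ge0$. Then $$\mathrm{sbf}_R(t)=\inf\Big\{\int_{t_0}^{t_0+t}s(u)\,du: s\text{ a supply pattern of }R,\ t_0\ge0\Big\}.$$ Demand bound: for $t\ge0$ let $$CI_i(t)=\min\Big\{C_i,\max\Big\{0,\;t-\Big\lfloor\tfrac{t+T_i-D_i}{T_i}\Big\rfloor T_i\Big\}\Big\},\qquad W_i(t)=\Big\lfloor\tfrac{t+T_i-D_i}{T_i}\Big\rfloor C_i+CI_i(t).$$ Fix $k$ and $A\ge0$, and put $t=A+D_k$. For $i\ne k$ define $$\bar I_i=\min\{W_i(t),\,t-C_k\},\qquad \hat I_i=\min\{W_i(t)-CI_i(t),\,t-C_k\},$$ and for $i=k$ define $$\bar I_k=\min\{W_k(t)-C_k,\,A\},\qquad \hat I_k=\min\{W_k(t)-C_k-CI_k(t),\,A\}.$$ Then $$\mathrm{dem}_k(A+D_k,m')=m'C_k+\sum_{i=1}^n\hat I_i+S,$$ where $S$ is the sum of the $m'-1$ largest values among $\{\bar I_i-\hat I_i\}_{i=1}^n$ (all of them if $n\le m'-1$; $S=0$ if $m'=1$). $C_\Sigma$ is defined analogously: the sum of all $C_i$ if $n\le m'-1$, and $0$ if $m'=1$. *)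

From Stdlib Require Import Reals List.
From Coquelicot Require Import Coquelicot.
Open Scope R_scope.

Definition sumR (n : nat) (f : nat -> R) : R :=
  fold_right Rplus 0 (map f (seq 0 n)).

Fixpoint insert_desc (x : R) (l : list R) : list R :=
  match l with
  | nil => x :: nil
  | y :: l' => if Rle_dec y x then x :: y :: l' else y :: insert_desc x l'
  end.
Fixpoint sort_desc (l : list R) : list R :=
  match l with nil => nil | x :: l' => insert_desc x (sort_desc l') end.

Definition sum_largest (p n : nat) (f : nat -> R) : R :=
  fold_right Rplus 0 (firstn p (sort_desc (map f (seq 0 n)))).

Definition floorR (x : R) : R := IZR (Int_part x).

Definition piecewise_constant (s : R -> R) : Prop :=
  forall a b, 0 <= a -> a <= b ->
    exists l : list R, forall x y, a <= x -> x <= y -> y <= b ->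
      (forall p, In p l -> ~ (x <= p <= y)) -> s x = s y.

Definition supply_pattern (Pi Theta : R) (m : nat) (s : R -> R) : Prop :=
  piecewise_constant s /\
  (forall t, 0 <= t -> exists v : nat, (v <= m)%nat /\ s t = INR v) /\
  (forall j : nat, RInt s (INR j * Pi) (INR (S j) * Pi) = Theta).

Definition sbf (Pi Theta : R) (m : nat) (t : R) : R :=
  real (Glb_Rbar (fun x => exists s t0, supply_pattern Pi Theta m s /\
                            0 <= t0 /\ x = RInt s t0 (t0 + t))).

Definition nJ (T D : R) (t : R) : R := floorR ((t + T - D) / T).
Definition CI (T C D : R) (t : R) : R :=
  Rmin C (Rmax 0 (t - nJ T D t * T)).
Definition W (T C D : R) (t : R) : R := nJ T D t * C + CI T C D t.

Definition Ibar (T C D : nat -> R) (k : nat) (A : R) (i : nat) : R :=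
  let t := A + D k in
  if Nat.eqb i k then Rmin (W (T k) (C k) (D k) t - C k) A
  else Rmin (W (T i) (C i) (D i) t) (t - C k).
Definition Ihat (T C D : nat -> R) (k : nat) (A : R) (i : nat) : R :=
  let t := A + D k in
  if Nat.eqb i k then Rmin (W (T k) (C k) (D k) t - C k - CI (T k) (C k) (D k) t) A
  else Rmin (W (T i) (C i) (D i) t - CI (T i) (C i) (D i) t) (t - C k).

(* dem_k(A + D_k, m) *)
Definition dem (n : nat) (T C D : nat -> R) (k : nat) (A : R) (m : nat) : R :=
  INR m * C k + sumR n (Ihat T C D k A)
  + sum_largest (m - 1) n (fun i => Ibar T C D k A i - Ihat T C D k A i).

(* Every supply pattern delivers Theta per period with at most m' processors, so its
   cumulative supply stays within Theta (1 - Theta / (m' Pi)) of the line (Theta / Pi) t;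
   hence sbf_R(t) >= (Theta / Pi) t - 2 Theta (1 - Theta / (m' Pi)).  On the demand side
   each interference term is at most the job-count bound (t + T_i - D_i) C_i / T_i, and
   each carry-in difference is at most C_i, so
   dem_k(t, m') <= m' C_k + t U_tau + U + C_Sigma.  Comparing both bounds at t = A + D_k
   shows that any A witnessing dem_k > sbf_R already satisfies the claimed inequality. *)
From Stdlib Require Import Reals List Lra Lia Sorting.Sorted ClassicalEpsilon.
From Coquelicot Require Import Coquelicot.
Open Scope R_scope.

(** * Sums of the largest values *)

Lemma Forall2_Rle_refl (l : list R) : Forall2 Rle l l.
Proof. induction l; constructor; auto; lra. Qed.

Lemma Forall2_Rle_trans (l1 l2 l3 : list R) :
  Forall2 Rle l1 l2 -> Forall2 Rle l2 l3 -> Forall2 Rle l1 l3.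
Proof.
  intros H12; revert l3.
  induction H12; intros l3 H23; inversion H23; subst; constructor; eauto; lra.
Qed.

Lemma Forall2_Rle_map (f g : nat -> R) (l : list nat) :
  (forall x, In x l -> f x <= g x) -> Forall2 Rle (map f l) (map g l).
Proof. induction l as [|x l IH]; simpl; constructor; auto. Qed.

Lemma Forall2_firstn {A B : Type} (P : A -> B -> Prop) p l1 l2 :
  Forall2 P l1 l2 -> Forall2 P (firstn p l1) (firstn p l2).
Proof.
  intros H; revert p; induction H; intros [|p]; simpl; constructor; auto.
Qed.

Lemma fold_Rplus_le (l1 l2 : list R) :
  Forall2 Rle l1 l2 -> fold_right Rplus 0 l1 <= fold_right Rplus 0 l2.
Proof. induction 1; simpl; lra. Qed.

Lemma Forall_insert_desc (P : R -> Prop) x l :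
  P x -> List.Forall P l -> List.Forall P (insert_desc x l).
Proof.
  intros Hx Hl; induction Hl as [|y l Hy Hl IH]; simpl.
  - constructor; auto.
  - destruct (Rle_dec y x); constructor; auto.
Qed.

Lemma StronglySorted_insert_desc x l :
  StronglySorted Rge l -> StronglySorted Rge (insert_desc x l).
Proof.
  induction l as [|y l IH]; simpl; intros Hl.
  - repeat constructor.
  - apply StronglySorted_inv in Hl as [Hl Hy].
    destruct (Rle_dec y x) as [Hyx|Hyx].
    + constructor; [constructor; auto|].
      constructor; [lra|]. eapply Forall_impl; [|exact Hy]. simpl; intros; lra.
    + constructor; auto. apply Forall_insert_desc; auto. lra.
Qed.

Lemma StronglySorted_sort_desc l : StronglySorted Rge (sort_desc l).
Proof.
  induction l; simpl; [constructor|]. apply StronglySorted_insert_desc; auto.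
Qed.

Lemma insert_desc_le_cons x y l :
  StronglySorted Rge (y :: l) -> x <= y -> Forall2 Rle (insert_desc x l) (y :: l).
Proof.
  revert y; induction l as [|z l IH]; intros y Hl Hxy; simpl.
  - constructor; [lra|constructor].
  - apply StronglySorted_inv in Hl as [Hl Hy]. apply Forall_inv in Hy.
    destruct (Rle_dec z x).
    + do 2 (constructor; [lra|]). apply Forall2_Rle_refl.
    + constructor; [lra|]. apply IH; auto. lra.
Qed.

Lemma cons_le_insert_desc x y1 l1 l2 :
  StronglySorted Rge (y1 :: l1) -> Forall2 Rle l1 l2 -> y1 <= x ->
  Forall2 Rle (y1 :: l1) (insert_desc x l2).
Proof.
  intros Hl H12; revert y1 Hl.
  induction H12 as [|z1 z2 l1 l2 Hz H12 IH]; intros y1 Hl Hy; simpl.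
  - constructor; [lra|constructor].
  - apply StronglySorted_inv in Hl as [Hl Hf]. apply Forall_inv in Hf.
    destruct (Rle_dec z2 x).
    + constructor; [lra|constructor; auto].
    + constructor; [lra|]. apply IH; auto. lra.
Qed.

Lemma insert_desc_mono_l x1 x2 l :
  StronglySorted Rge l -> x1 <= x2 -> Forall2 Rle (insert_desc x1 l) (insert_desc x2 l).
Proof.
  induction l as [|y l IH]; intros Hl Hx; simpl.
  - constructor; [lra|constructor].
  - destruct (Rle_dec y x1); destruct (Rle_dec y x2); try lra.
    + constructor; auto. apply Forall2_Rle_refl.
    + constructor; [lra|]. apply insert_desc_le_cons; auto. lra.
    + constructor; [lra|]. apply IH; auto. apply StronglySorted_inv in Hl; tauto.
Qed.

Lemma insert_desc_mono_r x l1 l2 :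
  StronglySorted Rge l1 -> StronglySorted Rge l2 -> Forall2 Rle l1 l2 ->
  Forall2 Rle (insert_desc x l1) (insert_desc x l2).
Proof.
  intros H1 H2 H12; induction H12 as [|y1 y2 l1 l2 Hy H12 IH]; simpl.
  - constructor; [lra|constructor].
  - pose proof (StronglySorted_inv H1) as [H1' _].
    pose proof (StronglySorted_inv H2) as [H2' _].
    destruct (Rle_dec y1 x); destruct (Rle_dec y2 x); try lra.
    + do 2 (constructor; [lra|]). exact H12.
    + constructor; [lra|]. apply cons_le_insert_desc; auto.
    + constructor; auto.
Qed.

Lemma sort_desc_mono l1 l2 :
  Forall2 Rle l1 l2 -> Forall2 Rle (sort_desc l1) (sort_desc l2).
Proof.
  induction 1; simpl; [constructor|].
  eapply Forall2_Rle_trans.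
  - apply insert_desc_mono_r; eauto using StronglySorted_sort_desc.
  - apply insert_desc_mono_l; auto using StronglySorted_sort_desc.
Qed.

Lemma In_seq_lt n i : In i (seq 0 n) -> (i < n)%nat.
Proof. intros Hi; apply in_seq in Hi; lia. Qed.

Lemma sum_largest_le p n f g :
  (forall i, (i < n)%nat -> f i <= g i) -> sum_largest p n f <= sum_largest p n g.
Proof.
  intros Hfg. apply fold_Rplus_le, Forall2_firstn, sort_desc_mono, Forall2_Rle_map.
  intros i Hi; apply Hfg, (In_seq_lt n i Hi).
Qed.

Lemma sumR_le n f g : (forall i, (i < n)%nat -> f i <= g i) -> sumR n f <= sumR n g.
Proof.
  intros Hfg. apply fold_Rplus_le, Forall2_Rle_map.
  intros i Hi; apply Hfg, (In_seq_lt n i Hi).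
Qed.

Lemma sumR_scal_plus n a f g :
  sumR n (fun i => a * f i + g i) = a * sumR n f + sumR n g.
Proof. unfold sumR; induction (seq 0 n); simpl; [lra|]. rewrite IHl; lra. Qed.

(** * Integrals of supply patterns *)

Lemma RInt_const_R (c a b : R) : RInt (fun _ => c) a b = c * (b - a).
Proof. rewrite RInt_const; apply Rmult_comm. Qed.

Lemma ex_RInt_step (s : R -> R) (l : list R) a b : a <= b ->
  (forall x y, a < x -> x <= y -> y < b ->
     (forall p, In p l -> ~ (x <= p <= y)) -> s x = s y) ->
  ex_RInt s a b.
Proof.
  revert a b; induction l as [|p l IH]; intros a b Hab Hs.
  - destruct (Req_dec a b) as [<-|Hne]; [apply ex_RInt_point|].
    apply (ex_RInt_ext (fun _ => s ((a + b) / 2))); [|apply ex_RInt_const].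
    rewrite Rmin_left, Rmax_right by lra; intros x Hx.
    destruct (Rle_dec x ((a + b) / 2)); [symmetry|]; apply Hs; try lra; intros q [].
  - assert (Hpiece : forall a' b', a <= a' -> a' <= b' -> b' <= b ->
              p <= a' \/ b' <= p -> ex_RInt s a' b').
    { intros a' b' Ha' Hab' Hb' Hp. apply IH; [lra|]. intros x y Hx Hxy Hy Hl.
      apply Hs; try lra. intros q [<-|Hq]; [lra|exact (Hl q Hq)]. }
    destruct (Rlt_le_dec a p); [destruct (Rlt_le_dec p b)|].
    + apply ex_RInt_Chasles with p; apply Hpiece; lra.
    + apply Hpiece; lra.
    + apply Hpiece; lra.
Qed.

Lemma ex_RInt_piecewise_constant s a b :
  piecewise_constant s -> 0 <= a -> a <= b -> ex_RInt s a b.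
Proof.
  intros Hs Ha Hab. destruct (Hs a b Ha Hab) as [l Hl].
  apply ex_RInt_step with l; auto. intros; apply Hl; auto; lra.
Qed.

Lemma supply_share_deviation_le M Pi Theta u v :
  0 < M -> 0 < Pi -> 0 <= Theta <= M * Pi -> v <= M * u -> v <= Theta ->
  v - Theta * u / Pi <= Theta - Theta * Theta / (M * Pi).
Proof.
  intros HM HPi HTh Hvu HvT.
  assert (Hcleared : M * Pi * v - M * Theta * u <= M * Pi * Theta - Theta * Theta).
  { destruct (Rle_dec (M * u) Theta).
    - assert (M * Pi * v <= M * Pi * (M * u)) by (apply Rmult_le_compat_l; nra). nra.
    - assert (M * Pi * v <= M * Pi * Theta) by (apply Rmult_le_compat_l; nra). nra. }
  apply Rmult_le_reg_r with (M * Pi); [nra|].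
  replace ((v - Theta * u / Pi) * (M * Pi)) with (M * Pi * v - M * Theta * u)
    by (field; lra).
  replace ((Theta - Theta * Theta / (M * Pi)) * (M * Pi))
    with (M * Pi * Theta - Theta * Theta) by (field; nra).
  exact Hcleared.
Qed.

Section SupplyPattern.
Variables (Pi Theta : R) (m : nat) (s : R -> R).
Hypothesis Hs : supply_pattern Pi Theta m s.
Hypothesis HPi : 0 < Pi.
Hypothesis Hm : (0 < m)%nat.
Hypothesis HTh : 0 <= Theta <= INR m * Pi.

Lemma ex_RInt_supply a b : 0 <= a -> a <= b -> ex_RInt s a b.
Proof. apply ex_RInt_piecewise_constant, Hs. Qed.

Lemma RInt_supply_Chasles a b c :
  0 <= a -> a <= b -> b <= c -> RInt s a c = RInt s a b + RInt s b c.
Proof.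
  intros Ha Hab Hbc.
  rewrite <- (RInt_Chasles s a b c); try (apply ex_RInt_supply; lra). reflexivity.
Qed.

Lemma RInt_supply_bounds a b : 0 <= a -> a <= b -> 0 <= RInt s a b <= INR m * (b - a).
Proof.
  intros Ha Hab. destruct Hs as [_ [Hval _]]. split.
  - apply RInt_ge_0; auto using ex_RInt_supply.
    intros x Hx. destruct (Hval x) as [v [_ ->]]; [lra|apply pos_INR].
  - rewrite <- RInt_const_R.
    apply RInt_le; auto using ex_RInt_supply, ex_RInt_const.
    intros x Hx. destruct (Hval x) as [v [Hvm ->]]; [lra|]. apply le_INR; auto.
Qed.

Lemma RInt_supply_periods j : RInt s 0 (INR j * Pi) = INR j * Theta.
Proof.
  induction j as [|j IH].
  - simpl; rewrite !Rmult_0_l, RInt_point; reflexivity.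
  - pose proof (pos_INR j).
    rewrite (RInt_supply_Chasles 0 (INR j * Pi)), IH, (proj2 (proj2 Hs)), S_INR;
      rewrite ?S_INR; nra.
Qed.

Lemma RInt_supply_deviation x : 0 <= x ->
  Rabs (RInt s 0 x - Theta / Pi * x) <= Theta - Theta * Theta / (INR m * Pi).
Proof.
  intros Hx.
  assert (HM : 0 < INR m) by (apply lt_0_INR; auto).
  destruct (nfloor_ex (x / Pi)) as [j [Hj1 Hj2]]; [apply Rdiv_le_0_compat; lra|].
  assert (Hlo : INR j * Pi <= x) by (apply Rle_div_r; lra).
  assert (Hhi : x <= (INR j + 1) * Pi) by (left; apply Rlt_div_l; lra).
  assert (Hj0 : 0 <= INR j * Pi) by (pose proof (pos_INR j); nra).
  set (v := RInt s (INR j * Pi) x).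
  set (w := RInt s x ((INR j + 1) * Pi)).
  assert (Hvw : v + w = Theta).
  { rewrite <- (proj2 (proj2 Hs) j), S_INR.
    symmetry; apply RInt_supply_Chasles; lra. }
  pose proof (RInt_supply_bounds _ _ Hj0 Hlo) as Hv. fold v in Hv.
  pose proof (RInt_supply_bounds _ _ Hx Hhi) as Hw. fold w in Hw.
  rewrite (RInt_supply_Chasles 0 (INR j * Pi) x), RInt_supply_periods by lra. fold v.
  replace (INR j * Theta + v - Theta / Pi * x) with (v - Theta * (x - INR j * Pi) / Pi)
    by (field; lra).
  assert (Hshare : Theta * (x - INR j * Pi) / Pi + Theta * ((INR j + 1) * Pi - x) / Pi
                   = Theta) by (field; lra).
  (* As v + w = Theta, the lower bound on v is the upper bound on w. *)
  apply Rabs_le; split.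
  - assert (w - Theta * ((INR j + 1) * Pi - x) / Pi
              <= Theta - Theta * Theta / (INR m * Pi))
      by (apply supply_share_deviation_le; lra).
    lra.
  - apply supply_share_deviation_le; lra.
Qed.

Lemma RInt_supply_lower t0 t : 0 <= t0 -> 0 <= t ->
  Theta / Pi * t - 2 * (Theta - Theta * Theta / (INR m * Pi)) <= RInt s t0 (t0 + t).
Proof.
  intros Ht0 Ht.
  pose proof (RInt_supply_deviation t0 Ht0) as D0.
  pose proof (RInt_supply_deviation (t0 + t) ltac:(lra)) as D1.
  rewrite (RInt_supply_Chasles 0 t0 (t0 + t)) in D1 by lra.
  apply Rabs_le_between in D0; apply Rabs_le_between in D1. lra.
Qed.

End SupplyPattern.

(** * The burst supply pattern *)

Section Burst.
Variables (Pi Theta : R) (m : nat).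
Hypothesis HPi : 0 < Pi.
Hypothesis Hm : (0 < m)%nat.
Hypothesis HTh : 0 <= Theta <= INR m * Pi.

Definition burst_on (t : R) : Prop :=
  exists j : nat, INR j * Pi <= t < INR j * Pi + Theta / INR m.

Definition burst (t : R) : R :=
  if excluded_middle_informative (burst_on t) then INR m else 0.

Lemma burst_length_bounds : 0 <= Theta / INR m <= Pi.
Proof.
  assert (0 < INR m) by (apply lt_0_INR; auto).
  split; [apply Rdiv_le_0_compat; lra|]. apply Rle_div_l; lra.
Qed.

Lemma burst_on_eq t : burst_on t -> burst t = INR m.
Proof. intros; unfold burst; destruct excluded_middle_informative; tauto. Qed.

Lemma burst_off_eq t : ~ burst_on t -> burst t = 0.
Proof. intros; unfold burst; destruct excluded_middle_informative; tauto. Qed.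

Lemma burst_piecewise_constant : piecewise_constant burst.
Proof.
  intros a b Ha Hab.
  destruct (nfloor_ex (Rmax 0 (b / Pi))) as [N [_ HN]]; [apply Rmax_l|].
  assert (HbN : b < INR (S N) * Pi).
  { rewrite S_INR. apply Rlt_div_l; [lra|]. pose proof (Rmax_r 0 (b / Pi)); lra. }
  exists (map (fun j => INR j * Pi) (seq 0 (S N))
          ++ map (fun j => INR j * Pi + Theta / INR m) (seq 0 (S N))).
  intros x y Hx Hxy Hy Hbreak.
  assert (Hin : forall j, INR j * Pi <= b -> In j (seq 0 (S N))).
  { intros j Hj. apply in_seq. split; [lia|]. simpl.
    apply INR_lt, Rmult_lt_reg_r with Pi; lra. }
  assert (Hstart : forall j, INR j * Pi <= b -> ~ (x <= INR j * Pi <= y)).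
  { intros j Hj. apply Hbreak, in_or_app; left.
    apply (in_map (fun j => INR j * Pi)); auto. }
  assert (Hend : forall j, INR j * Pi <= b -> ~ (x <= INR j * Pi + Theta / INR m <= y)).
  { intros j Hj. apply Hbreak, in_or_app; right.
    apply (in_map (fun j => INR j * Pi + Theta / INR m)); auto. }
  destruct (classic (burst_on x)) as [[j Hj]|Hxoff];
    destruct (classic (burst_on y)) as [Hyon|Hyoff].
  - rewrite !burst_on_eq; eauto. exists j; auto.
  - exfalso. apply Hyoff; exists j. specialize (Hend j ltac:(lra)). lra.
  - exfalso. destruct Hyon as [j Hj]. apply Hxoff; exists j.
    specialize (Hstart j ltac:(lra)). lra.
  - rewrite !burst_off_eq; auto.
Qed.

Lemma RInt_burst_period j : RInt burst (INR j * Pi) (INR (S j) * Pi) = Theta.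
Proof.
  change (@eq R (RInt burst (INR j * Pi) (INR (S j) * Pi)) Theta).
  pose proof burst_length_bounds as [Hl0 HlPi].
  assert (Hj0 : 0 <= INR j * Pi) by (pose proof (pos_INR j); nra).
  set (c := INR j * Pi + Theta / INR m).
  assert (Hex : forall a b, 0 <= a -> a <= b -> ex_RInt burst a b)
    by (intros; apply ex_RInt_piecewise_constant; auto using burst_piecewise_constant).
  assert (Hsplit : RInt burst (INR j * Pi) (INR (S j) * Pi)
                   = RInt burst (INR j * Pi) c + RInt burst c (INR (S j) * Pi)).
  { symmetry; apply (RInt_Chasles burst); apply Hex; rewrite ?S_INR; unfold c; lra. }
  rewrite Hsplit, (RInt_ext burst (fun _ => INR m) (INR j * Pi) c),
          (RInt_ext burst (fun _ => 0) c (INR (S j) * Pi)), !RInt_const_R.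
  - unfold c. field. apply not_0_INR; lia.
  - rewrite S_INR, Rmin_left, Rmax_right by (unfold c; lra). intros x Hx.
    apply burst_off_eq. intros [j' Hj'].
    destruct (Nat.le_gt_cases j' j) as [Hle|Hgt]; [apply le_INR in Hle|];
      [|apply le_INR in Hgt; rewrite S_INR in Hgt]; unfold c in Hx; nra.
  - rewrite Rmin_left, Rmax_right by (unfold c; lra). intros x Hx.
    apply burst_on_eq. exists j. unfold c in Hx; lra.
Qed.

Lemma burst_supply_pattern : supply_pattern Pi Theta m burst.
Proof.
  split; [apply burst_piecewise_constant|split].
  - intros t _. destruct (classic (burst_on t)).
    + exists m; split; auto. apply burst_on_eq; auto.
    + exists 0%nat; split; [lia|]. apply burst_off_eq; auto.
  - apply RInt_burst_period.
Qed.

End Burst.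

Lemma sbf_lower Pi Theta m t :
  0 < Pi -> (0 < m)%nat -> 0 <= Theta <= INR m * Pi -> 0 <= t ->
  Theta / Pi * t - 2 * (Theta - Theta * Theta / (INR m * Pi)) <= sbf Pi Theta m t.
Proof.
  intros HPi Hm HTh Ht. unfold sbf.
  set (E := fun x : R => exists s t0, supply_pattern Pi Theta m s /\ 0 <= t0 /\
                                      x = RInt s t0 (t0 + t)).
  destruct (Glb_Rbar_correct E) as [Hlb Hglb].
  (* Without a witness pattern the infimum would be +oo, whose [real] part is 0. *)
  assert (HE : E (RInt (burst Pi Theta m) 0 (0 + t))).
  { exists (burst Pi Theta m), 0.
    split; [apply burst_supply_pattern; auto|split; [lra|reflexivity]]. }
  assert (Hle : Rbar_le (Theta / Pi * t - 2 * (Theta - Theta * Theta / (INR m * Pi)))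
                        (Glb_Rbar E)).
  { apply Hglb. intros x [s [t0 [Hs [Ht0 ->]]]]. apply RInt_supply_lower; auto. }
  pose proof (Hlb _ HE) as Hfin.
  destruct (Glb_Rbar E); simpl in *; tauto.
Qed.

(** * Bounds on the demand *)

Section Demand.
Variables (n : nat) (T C D : nat -> R) (k : nat) (A : R).
Hypothesis Htask : forall i, (i < n)%nat -> 0 < C i /\ C i <= D i /\ D i <= T i.

Let t := A + D k.

Lemma CI_bounds i : (i < n)%nat -> 0 <= CI (T i) (C i) (D i) t <= C i.
Proof.
  intros Hi; destruct (Htask i Hi) as [HC _]. unfold CI. split.
  - apply Rmin_glb; [lra|apply Rmax_l].
  - apply Rmin_l.
Qed.

Lemma nJ_mul_le i : (i < n)%nat ->
  nJ (T i) (D i) t * C i <= t * (C i / T i) + (T i - D i) * C i / T i.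
Proof.
  intros Hi; destruct (Htask i Hi) as [HC [HCD HDT]].
  unfold nJ, floorR. destruct (base_Int_part ((t + T i - D i) / T i)) as [Hfloor _].
  replace (t * (C i / T i) + (T i - D i) * C i / T i)
    with ((t + T i - D i) / T i * C i) by (field; lra).
  apply Rmult_le_compat_r; lra.
Qed.

Lemma Ihat_le i : (i < n)%nat ->
  Ihat T C D k A i <= t * (C i / T i) + (T i - D i) * C i / T i.
Proof.
  intros Hi. pose proof (nJ_mul_le i Hi). pose proof (CI_bounds i Hi).
  destruct (Htask i Hi) as [HC _].
  unfold Ihat, W; fold t; destruct (Nat.eqb_spec i k) as [<-|_];
    (eapply Rle_trans; [apply Rmin_l|]); lra.
Qed.

Lemma Ibar_sub_Ihat_le i : (i < n)%nat -> Ibar T C D k A i - Ihat T C D k A i <= C i.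
Proof.
  intros Hi. pose proof (CI_bounds i Hi) as [HCI0 HCI].
  assert (Hmin : forall a c x, 0 <= c -> Rmin a x - Rmin (a - c) x <= c).
  { intros a c x Hc; unfold Rmin; destruct Rle_dec; destruct Rle_dec; lra. }
  unfold Ibar, Ihat; fold t; destruct (Nat.eqb_spec i k) as [<-|_];
    (apply Rle_trans with (CI (T i) (C i) (D i) t); [apply Hmin|]); assumption.
Qed.

Lemma dem_upper m :
  dem n T C D k A m <= INR m * C k + t * sumR n (fun i => C i / T i)
    + sumR n (fun i => (T i - D i) * C i / T i) + sum_largest (m - 1) n C.
Proof.
  unfold dem.
  pose proof (sumR_le n _ _ Ihat_le) as HIhat. rewrite sumR_scal_plus in HIhat.
  pose proof (sum_largest_le (m - 1) n _ C Ibar_sub_Ihat_le).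
  lra.
Qed.

End Demand.

(* tasks indexed 0..n-1; paper's k in {1..n} is k < n here *)
Theorem theorem2 (n : nat) (T C D : nat -> R) (m : nat) (Pi Theta : R) (k : nat) :
  (forall i, (i < n)%nat -> 0 < C i /\ C i <= D i /\ D i <= T i) ->
  (0 < m)%nat ->
  0 < Pi -> 0 <= Theta -> Theta <= INR m * Pi ->
  sumR n (fun i => C i / T i) < Theta / Pi ->
  (k < n)%nat ->
  let Utau := sumR n (fun i => C i / T i) in
  let CSigma := sum_largest (m - 1) n C in
  let U := sumR n (fun i => (T i - D i) * C i / T i) in
  let B := Theta / Pi * (2 + 2 * (Pi - Theta / INR m)) in
  (exists A, 0 <= A /\ dem n T C D k A m > sbf Pi Theta m (A + D k)) ->
  exists A, 0 <= A /\ dem n T C D k A m > sbf Pi Theta m (A + D k) /\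
    A < (CSigma + INR m * C k - D k * (Theta / Pi - Utau) + U + B)
        / (Theta / Pi - Utau).
Proof.
  intros Htask Hm HPi HTh HThm HU Hk Utau CSigma U B [A [HA Hdem]].
  exists A; split; [exact HA|split; [exact Hdem|]].
  destruct (Htask k Hk) as [HCk [HCDk _]].
  pose proof (dem_upper n T C D k A Htask m) as Hdem_up. fold Utau U CSigma in Hdem_up.
  pose proof (sbf_lower Pi Theta m (A + D k) HPi Hm (conj HTh HThm) ltac:(lra)) as Hsbf.
  assert (HB : B = 2 * (Theta / Pi) + 2 * (Theta - Theta * Theta / (INR m * Pi))).
  { unfold B. field. split; [lra|apply not_0_INR; lia]. }
  assert (0 <= Theta / Pi) by (apply Rdiv_le_0_compat; lra).
  apply Rlt_div_r; [unfold Utau; lra|].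
  assert (A * (Theta / Pi - Utau)
          = Theta / Pi * (A + D k) - (A + D k) * Utau - D k * (Theta / Pi - Utau)) by ring.
  lra.
Qed.
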